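(* Let $n,m\ge1$, let $K\subset\mathbb{R}^n$ be compact, let $f:K\to\mathbb{R}$ be continuous and $\varepsilon>0$. Then there exists an IWCNN $f_\theta=g^{\mathrm{ICNN}}_{\theta_1}\circ g^{\mathrm{sm}}_{\theta_2}$ with intermediate dimension $m$ (i.e. $g^{\mathrm{sm}}_{\theta_2}:\mathbb{R}^n\to\mathbb{R}^m$ and $g^{\mathrm{ICNN}}_{\theta_1}:\mathbb{R}^m\to\mathbb{R}$) such that $\sup_{x\in K}|f_\theta(x)-f(x)|<\varepsilon$.
   Context: An input convex neural network (ICNN) $g:\mathbb{R}^m\to\mathbb{R}$ is a feedforward network $z_1=\sigma(W_0^{(y)}u+b_0)$, $z_{i+1}=\sigma(W_i^{(z)}z_i+W_i^{(y)}u+b_i)$, output $g(u)=z_L$ (final layer affine allowed), with nonnegative weight matrices $W_i^{(z)}$ and \texttt{ReLU} (or other convex nondecreasing) activations $\sigma$, so that $g$ is convex in its input $u$. $g^{\mathrm{sm}}:\mathbb{R}^n\to\mathbb{R}^m$ is a feedforward neural network (of arbitrary depth) whose activation functions are nonaffine, continuously differentiable with Lipschitz derivative (e.g. SiLU). An input weakly convex neural network (IWCNN) is a composition $g^{\mathrm{ICNN}}\circ g^{\mathrm{sm}}$ of such networks. *)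

From HB Require Import structures.
From mathcomp Require Import all_boot all_order all_algebra.
From mathcomp Require Import all_classical all_reals all_analysis.
Set Implicit Arguments. Unset Strict Implicit. Unset Printing Implicit Defensive.
Import Order.TTheory GRing.Theory Num.Theory.
Local Open Scope ring_scope.

Section Nets.
Variable R : realType.

Definition relu (x : R) : R := Num.max x 0.

Inductive ffn (m : nat) : nat -> Type :=
| ffn_out (n : nat) : 'M[R]_(m, n) -> 'cV[R]_m -> ffn m n
| ffn_layer (n k : nat) : 'M[R]_(k, n) -> 'cV[R]_k -> ffn m k -> ffn m n.

Fixpoint ffn_eval (sigma : R -> R) (m n : nat) (N : ffn m n) : 'cV[R]_n -> 'cV[R]_m :=
  match N in ffn _ n return 'cV[R]_n -> 'cV[R]_m with
  | ffn_out _ A b => fun x => A *m x + b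
  | ffn_layer _ _ A b N' => fun x => ffn_eval sigma N' (map_mx sigma (A *m x + b))
  end.

(* admissible activation for g^sm: nonaffine, differentiable with Lipschitz
   derivative (hence continuously differentiable). *)
Definition sm_activation (sigma : R -> R) : Prop :=
  [/\ ~ (exists a b : R, forall x, sigma x = a * x + b),
      (forall x, derivable sigma x 1) &
      exists L : R, forall x y, `|derive1 sigma x - derive1 sigma y| <= L * `|x - y| ].

(* [icnn_tail m k] : the layers after z_1, where k is the width of the current z. *)
Inductive icnn_tail (m : nat) : nat -> Type :=
| ic_out (k : nat) (act : bool) :
    'M[R]_(1, k) -> 'M[R]_(1, m) -> 'cV[R]_1 -> icnn_tail m k
| ic_layer (k k' : nat) :
    'M[R]_(k', k) -> 'M[R]_(k', m) -> 'cV[R]_k' -> icnn_tail m k' -> icnn_tail m k.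

Inductive icnn (m : nat) : Type :=
| icnn_single (act : bool) : 'M[R]_(1, m) -> 'cV[R]_1 -> icnn m
| icnn_deep (k : nat) : 'M[R]_(k, m) -> 'cV[R]_k -> icnn_tail m k -> icnn m.

Definition opt_relu (act : bool) (x : R) : R := if act then relu x else x.

Fixpoint icnn_tail_eval (m k : nat) (T : icnn_tail m k) (u : 'cV[R]_m)
  : 'cV[R]_k -> R :=
  match T in icnn_tail _ k return 'cV[R]_k -> R with
  | ic_out _ act Wz Wy b => fun z => opt_relu act ((Wz *m z + Wy *m u + b) ord0 ord0)
  | ic_layer _ _ Wz Wy b T' =>
      fun z => icnn_tail_eval T' u (map_mx relu (Wz *m z + Wy *m u + b))
  end.

Definition icnn_eval (m : nat) (N : icnn m) (u : 'cV[R]_m) : R :=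
  match N with
  | icnn_single act W0 b0 => opt_relu act ((W0 *m u + b0) ord0 ord0)
  | icnn_deep _ W0 b0 T => icnn_tail_eval T u (map_mx relu (W0 *m u + b0))
  end.

Fixpoint icnn_tail_nonneg (m k : nat) (T : icnn_tail m k) : Prop :=
  match T with
  | ic_out _ _ Wz _ _ => forall i j, 0 <= Wz i j
  | ic_layer _ _ Wz _ _ T' => (forall i j, 0 <= Wz i j) /\ icnn_tail_nonneg T'
  end.

Definition icnn_nonneg (m : nat) (N : icnn m) : Prop :=
  match N with
  | icnn_single _ _ _ => True
  | icnn_deep _ _ _ T => icnn_tail_nonneg T
  end.

End Nets.

(* Take sigma(t) = t^2, which is admissible, and let the ICNN be the linear, hence
   convex, map u |-> u_0: everything then rests on the smooth part.  Networks with
   square activations are closed under sums and products (polarization), and one extra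
   layer can realize the identity, so networks of different depths can be run side by
   side; their scalar outputs thus form an algebra containing the coordinates.  Its
   uniform closure on K contains |h| for every bounded h, because the polynomials
   p_(k+1) = p_k + (t^2 - p_k^2) / 2 converge to |t| uniformly on [-1, 1]; hence it is
   stable under finite maxima.  Finally, by compactness, f is uniformly close to a
   finite maximum of quadratic bumps x |-> f(y) - 2 B |x - y|^2 / delta_y^2, where B
   bounds |f| on K and delta_y is a modulus of continuity of f at y. *)

From HB Require Import structures.
From mathcomp Require Import all_boot all_order all_algebra.
From mathcomp Require Import all_classical all_reals all_analysis.
From mathcomp Require Import finmap ring lra.
Import Order.TTheory GRing.Theory Num.Theory.
Import numFieldNormedType.Exports.
Local Open Scope classical_set_scope.
Local Open Scope ring_scope.
Set Implicit Arguments. Unset Strict Implicit. Unset Printing Implicit Defensive.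

Section FfnCombinators.
Variables (R : realType) (sigma : R -> R).

Definition ffn_precomp m n p (N : ffn R m n) : 'M[R]_(n, p) -> 'cV[R]_n -> ffn R m p :=
  match N in ffn _ _ n return 'M[R]_(n, p) -> 'cV[R]_n -> ffn R m p with
  | ffn_out _ A b => fun C d => ffn_out (A *m C) (A *m d + b)
  | ffn_layer _ _ A b N' => fun C d => ffn_layer (A *m C) (A *m d + b) N'
  end.

Fixpoint ffn_comp l m n (N2 : ffn R l m) (N1 : ffn R m n) : ffn R l n :=
  match N1 in ffn _ _ n return ffn R l n with
  | ffn_out _ A b => ffn_precomp N2 A b
  | ffn_layer _ _ A b N1' => ffn_layer A b (ffn_comp N2 N1')
  end.

Fixpoint ffn_depth m n (N : ffn R m n) : nat :=
  if N is ffn_layer _ _ _ _ N' then (ffn_depth N').+1 else 0.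

Lemma ffn_eval_precomp m n p (N : ffn R m n) (C : 'M[R]_(n, p)) d x :
  ffn_eval sigma (ffn_precomp N C d) x = ffn_eval sigma N (C *m x + d).
Proof. by case: N C d => [? A b|? ? A b N'] C d /=; rewrite mulmxDr mulmxA addrA. Qed.

Lemma ffn_eval_comp l m n (N2 : ffn R l m) (N1 : ffn R m n) x :
  ffn_eval sigma (ffn_comp N2 N1) x = ffn_eval sigma N2 (ffn_eval sigma N1 x).
Proof. by elim: N1 x => [? A b|? ? A b N1' IH] x /=; rewrite ?ffn_eval_precomp ?IH. Qed.

Lemma ffn_depth_precomp m n p (N : ffn R m n) (C : 'M[R]_(n, p)) d :
  ffn_depth (ffn_precomp N C d) = ffn_depth N.
Proof. by case: N C d. Qed.

Lemma ffn_depth_comp l m n (N2 : ffn R l m) (N1 : ffn R m n) :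
  ffn_depth (ffn_comp N2 N1) = (ffn_depth N1 + ffn_depth N2)%N.
Proof. by elim: N1 => [? A b|? ? A b N1' /= ->]; rewrite ?ffn_depth_precomp. Qed.

Lemma ffn_block k1 p1 k2 p2 (N1 : ffn R k1 p1) (N2 : ffn R k2 p2) :
  ffn_depth N1 = ffn_depth N2 ->
  exists N : ffn R (k1 + k2) (p1 + p2), forall u v,
    ffn_eval sigma N (col_mx u v) = col_mx (ffn_eval sigma N1 u) (ffn_eval sigma N2 v).
Proof.
elim: N1 p2 N2 => [? A1 b1|? ? A1 b1 N1' IH] p2 [? A2 b2|? ? A2 b2 N2'] //= => [_|[eqd]].
  exists (ffn_out (block_mx A1 0 0 A2) (col_mx b1 b2)) => u v /=.
  by rewrite mul_block_col !mul0mx addr0 add0r add_col_mx.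
have [N HN] := IH _ N2' eqd.
exists (ffn_layer (block_mx A1 0 0 A2) (col_mx b1 b2) N) => u v /=.
by rewrite mul_block_col !mul0mx addr0 add0r add_col_mx map_col_mx HN.
Qed.

End FfnCombinators.

Section SquareNetworks.
Variable R : realType.

Definition square (x : R) := x ^+ 2.

(* Implements the identity through [t = ((t + 1)^2 - (t - 1)^2) / 4]. *)
Definition id_net k : ffn R k k :=
  ffn_layer (col_mx 1%:M 1%:M) (col_mx (const_mx 1) (const_mx (-1)))
    (ffn_out (row_mx (4^-1 *: 1%:M) (- 4^-1 *: 1%:M)) 0).

Lemma ffn_eval_id_net k x : ffn_eval square (id_net k) x = x.
Proof.
rewrite /= mul_col_mx add_col_mx map_col_mx mul_row_col addr0 -!scalemxAl !mul1mx.
by apply/matrixP => i j; rewrite !mxE /square; field.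
Qed.

Lemma ffn_pad k p (N : ffn R k p) d : (ffn_depth N <= d)%N ->
  exists N' : ffn R k p, ffn_depth N' = d /\ ffn_eval square N' =1 ffn_eval square N.
Proof.
move=> /subnK <-; elim: (d - ffn_depth N)%N => [|j [N' [dN' eN']]]; first by exists N.
exists (ffn_comp (id_net k) N'); split; first by rewrite ffn_depth_comp dN' addn1.
by move=> x; rewrite ffn_eval_comp ffn_eval_id_net.
Qed.

Definition realizable p k (F : 'cV[R]_p -> 'cV[R]_k) :=
  exists N : ffn R k p, forall x, ffn_eval square N x = F x.

Lemma realizable_affine p k (A : 'M[R]_(k, p)) b : realizable (fun x => A *m x + b).
Proof. by exists (ffn_out A b). Qed.

Lemma realizable_comp p k l (G : 'cV[R]_k -> 'cV[R]_l) (F : 'cV[R]_p -> 'cV[R]_k) :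
  realizable G -> realizable F -> realizable (fun x => G (F x)).
Proof. by move=> [N2 eN2] [N1 eN1]; exists (ffn_comp N2 N1) => x; rewrite ffn_eval_comp eN1. Qed.

Lemma realizable_col p k1 k2 (F : 'cV[R]_p -> 'cV[R]_k1) (G : 'cV[R]_p -> 'cV[R]_k2) :
  realizable F -> realizable G -> realizable (fun x => col_mx (F x) (G x)).
Proof.
move=> [N1 eN1] [N2 eN2].
have [N1' [dN1 eN1']] := ffn_pad (leq_maxl (ffn_depth N1) (ffn_depth N2)).
have [N2' [dN2 eN2']] := ffn_pad (leq_maxr (ffn_depth N1) (ffn_depth N2)).
have [N eN] := ffn_block square (etrans dN1 (esym dN2)).
exists (ffn_precomp N (col_mx 1%:M 1%:M) 0) => x.
by rewrite ffn_eval_precomp mul_col_mx mul1mx addr0 eN eN1' eN2' eN1 eN2.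
Qed.

Definition netfun n (F : 'cV[R]_n -> R) := realizable (fun x => (F x)%:M : 'cV[R]_1).

Lemma netfun_const n c : netfun (fun _ : 'cV[R]_n => c).
Proof. by exists (ffn_out 0 c%:M) => x /=; rewrite mul0mx add0r. Qed.

Lemma netfun_coord n i : netfun (fun x : 'cV[R]_n => x i ord0).
Proof.
exists (ffn_out (delta_mx ord0 i) 0) => x /=.
by apply/matrixP => a b; rewrite !ord1 addr0 -rowE !mxE eqxx mulr1n.
Qed.

Lemma netfun_add n (F G : 'cV[R]_n -> R) :
  netfun F -> netfun G -> netfun (fun x => F x + G x).
Proof.
move=> nF nG; have := realizable_comp (realizable_affine (row_mx 1%:M 1%:M) 0)
  (realizable_col nF nG).
by congr realizable; apply/funext => x; rewrite mul_row_col !mul1mx addr0 raddfD.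
Qed.

(* Polarization: [a b = ((a + b)^2 - (a - b)^2) / 4]. *)
Lemma netfun_mul n (F G : 'cV[R]_n -> R) :
  netfun F -> netfun G -> netfun (fun x => F x * G x).
Proof.
move=> nF nG.
pose mul_net : ffn R 1 (1 + 1) :=
  ffn_layer (col_mx (row_mx 1%:M 1%:M) (row_mx 1%:M (-1)%:M)) 0
    (ffn_out (row_mx (4^-1)%:M (- 4^-1)%:M) 0).
have mulP : realizable (ffn_eval square mul_net) by exists mul_net.
have := realizable_comp mulP (realizable_col nF nG).
congr realizable; apply/funext => x /=.
rewrite mul_col_mx !mul_row_col !addr0 map_col_mx mul_row_col !mul_scalar_mx.
by apply/matrixP => i j; rewrite !ord1 !mxE eqxx /square !mulr1n; field.
Qed.

Lemma netfun_scale n c (F : 'cV[R]_n -> R) : netfun F -> netfun (fun x => c * F x).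
Proof. exact/netfun_mul/netfun_const. Qed.

Lemma netfun_sub n (F G : 'cV[R]_n -> R) :
  netfun F -> netfun G -> netfun (fun x => F x - G x).
Proof.
move=> nF /(netfun_scale (-1)) nG.
by under eq_fun do rewrite -mulN1r; exact: netfun_add.
Qed.

Lemma netfun_sum n I (r : seq I) (F : I -> 'cV[R]_n -> R) :
  (forall i, netfun (F i)) -> netfun (fun x => \sum_(i <- r) F i x).
Proof.
move=> nF; elim: r => [|i r IH]; first by under eq_fun do rewrite big_nil; exact: netfun_const.
by under eq_fun do rewrite big_cons; exact: netfun_add.
Qed.

End SquareNetworks.

Section AbsPoly.
Variable R : realType.

Fixpoint abs_poly k (t : R) : R :=
  if k is k'.+1 then abs_poly k' t + (t ^+ 2 - abs_poly k' t ^+ 2) / 2 else 0.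

Lemma abs_poly_bounds k t : `|t| <= 1 ->
  [/\ 0 <= abs_poly k t, abs_poly k t <= `|t|
    & `|t| - abs_poly k t <= `|t| * (1 - `|t| / 2) ^+ k].
Proof.
move=> t1; have t2 : t ^+ 2 = `|t| ^+ 2 by rewrite real_normK ?num_real.
have t0 : 0 <= `|t| := normr_ge0 t.
elim: k => [|k [p0 pt err]] /=; first by rewrite expr0 mulr1 subr0.
set a := `|t| in t1 t0 pt err *; set p := abs_poly k t in p0 pt err *.
have step : a - (p + (a ^+ 2 - p ^+ 2) / 2) = (a - p) * (1 - (a + p) / 2) by field.
have ap : 0 <= a - p by lra.
have apq : 0 <= 1 - (a + p) / 2 <= 1 - a / 2 by apply/andP; split; lra.
rewrite t2 -/a; split.
- by rewrite !expr2; nra.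
- by have := mulr_ge0 ap (proj1 (andP apq)); rewrite -step; lra.
- by rewrite step exprSr mulrA; apply: ler_pM => //; case/andP: apq.
Qed.

Lemma bernoulli_le1 (b : R) k : 0 <= b <= 1 -> (1 - b) ^+ k * (1 + k%:R * b) <= 1.
Proof.
move=> b01; elim: k => [|k IH]; first by rewrite expr0 mul0r addr0 mulr1.
rewrite exprSr -mulrA; apply: le_trans IH; apply: ler_wpM2l.
  by rewrite exprn_ge0 //; lra.
by rewrite -natr1; have : 0 <= k%:R :> R by []; nra.
Qed.

Lemma abs_poly_err k t : `|t| <= 1 ->
  0 <= `|t| - abs_poly k t /\ k%:R * (`|t| - abs_poly k t) <= 2.
Proof.
move=> t1; have [p0 pt err] := abs_poly_bounds k t1.
have := @bernoulli_le1 (`|t| / 2) k; have : 0 <= `|t| by [].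
have : 0 <= k%:R :> R by []; have : 0 <= (1 - `|t| / 2) ^+ k by rewrite exprn_ge0 //; lra.
split; nra.
Qed.

Lemma netfun_abs_poly n k (F : 'cV[R]_n -> R) :
  netfun F -> netfun (fun x => abs_poly k (F x)).
Proof.
move=> nF; elim: k => [|k IH] /=; first exact: netfun_const.
apply: netfun_add => //; under eq_fun do rewrite mulrC.
by apply/netfun_scale/netfun_sub; under eq_fun do rewrite expr2; exact: netfun_mul.
Qed.

End AbsPoly.

Section Approximation.
Variables (R : realType) (n : nat) (A : set 'cV[R]_n).
Implicit Types (a b h : 'cV[R]_n -> R).

Definition approximable h :=
  forall e, 0 < e -> exists2 F, netfun F & forall x, A x -> `|F x - h x| <= e.

Definition bounded_on h := exists C, forall x, A x -> `|h x| <= C.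

Lemma approximable_netfun h : netfun h -> approximable h.
Proof. by move=> nh e e0; exists h => // x _; rewrite subrr normr0 ltW. Qed.

Lemma approximableD a b :
  approximable a -> approximable b -> approximable (fun x => a x + b x).
Proof.
move=> aa ab e e0; have e2 : 0 < e / 2 by lra.
have [Fa na ea] := aa _ e2; have [Fb nb eb] := ab _ e2.
exists (fun x => Fa x + Fb x) => [|x Ax]; first exact: netfun_add.
rewrite (_ : _ - _ = (Fa x - a x) + (Fb x - b x)); last by ring.
by apply: le_trans (ler_normD _ _) _; have := ea x Ax; have := eb x Ax; lra.
Qed.

Lemma approximableZ c h : approximable h -> approximable (fun x => c * h x).
Proof.
move=> ah e e0; have c1 : 0 < `|c| + 1 by rewrite ltr_wpDl.
have [F nF eF] := ah _ (divr_gt0 e0 c1).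
exists (fun x => c * F x) => [|x Ax]; first exact: netfun_scale.
rewrite -mulrBr normrM; apply: le_trans (_ : `|c| * (e / (`|c| + 1)) <= _).
  exact/ler_wpM2l/eF.
by rewrite mulrA ler_pdivrMr //; have := normr_ge0 c; nra.
Qed.

Lemma approximable_norm_netfun h D : 0 < D -> netfun h ->
  (forall x, A x -> `|h x| <= D) -> approximable (fun x => `|h x|).
Proof.
move=> D0 nh hD e e0; pose k := (Num.trunc (2 * D / e)).+1.
have kD : 2 * D <= k%:R * e by rewrite -ler_pdivrMr // ltW // truncnS_gt.
have Di : 0 <= D^-1 by rewrite invr_ge0 ltW.
exists (fun x => D * abs_poly k (D^-1 * h x)) => [|x Ax].
  exact/netfun_scale/netfun_abs_poly/netfun_scale.
have u1 : `|D^-1 * h x| <= 1 by rewrite normrM (ger0_norm Di) ler_pdivrMl // mulr1 hD.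
have Du : D * `|D^-1 * h x| = `|h x|.
  by rewrite normrM (ger0_norm Di) mulrA mulfV ?gt_eqF // mul1r.
have [err0 errk] := abs_poly_err k u1.
rewrite -Du -mulrBr normrM (gtr0_norm D0) distrC (ger0_norm err0).
have kD' : 0 <= k%:R * e - 2 * D by rewrite subr_ge0.
have := mulr_ge0 err0 kD'; have : 0 <= e by lra. nra.
Qed.

Lemma approximable_norm h :
  bounded_on h -> approximable h -> approximable (fun x => `|h x|).
Proof.
move=> [C hC] ah e e0; pose e' : R := Num.min 1 (e / 2).
have e'0 : 0 < e' by rewrite lt_min ltr01 /=; lra.
have [e'1 e'e] : e' <= 1 /\ e' <= e / 2 by split; rewrite ge_min lexx ?orbT.
have [h' nh' eh'] := ah _ e'0.
have h'C x : A x -> `|h' x| <= `|C| + 1.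
  move=> Ax; have := ler_distD (h x) (h' x) 0; rewrite !subr0.
  by have := eh' x Ax; have := hC x Ax; have := ler_norm C; lra.
have [F nF eF] := approximable_norm_netfun (ltr_wpDl (normr_ge0 C) ltr01) nh' h'C
  (divr_gt0 e0 (ltr0Sn _ 1)).
exists F => // x Ax; apply: le_trans (ler_distD `|h' x| _ _) _.
by have := eF x Ax; have := ler_dist_dist (h' x) (h x); have := eh' x Ax; lra.
Qed.

Lemma bounded_on_max a b :
  bounded_on a -> bounded_on b -> bounded_on (fun x => Num.max (a x) (b x)).
Proof.
move=> [Ca hCa] [Cb hCb]; exists (Num.max Ca Cb) => x Ax.
by case: (leP (a x) (b x)) => _; rewrite le_max; [rewrite (hCb x Ax) orbT | rewrite (hCa x Ax)].
Qed.

Lemma approximable_max a b : bounded_on a -> bounded_on b ->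
  approximable a -> approximable b -> approximable (fun x => Num.max (a x) (b x)).
Proof.
move=> [Ca hCa] [Cb hCb] aa ab.
have -> : (fun x => Num.max (a x) (b x)) =
          (fun x => 2^-1 * (a x + b x + `|a x + -1 * b x|)).
  by apply/funext => x; rewrite maxr_absE mulrC mulN1r.
apply/approximableZ/approximableD/approximable_norm; last exact/approximableD/approximableZ.
  exact: approximableD.
exists (Ca + Cb) => x Ax; rewrite mulN1r; apply: le_trans (ler_normB _ _) _.
exact: lerD (hCa x Ax) (hCb x Ax).
Qed.

Lemma approximable_bigmax I (s : seq I) (g : I -> 'cV[R]_n -> R) c :
  (forall i, bounded_on (g i)) -> (forall i, approximable (g i)) ->
  approximable (fun x => \big[Num.max/c]_(i <- s) g i x).
Proof.
move=> bg ag; suff [] : bounded_on (fun x => \big[Num.max/c]_(i <- s) g i x) /\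
  approximable (fun x => \big[Num.max/c]_(i <- s) g i x) by [].
elim: s => [|i s [bs ap]].
  under eq_fun do rewrite big_nil.
  by split; [exists `|c| | exact/approximable_netfun/netfun_const].
under eq_fun do rewrite big_cons.
by split; [exact: bounded_on_max | exact: approximable_max].
Qed.

End Approximation.

Lemma mx_entry_le_norm (R : realDomainType) p q (M : 'M[R]_(p, q)) i j : `|M i j| <= `|M|.
Proof. by rewrite [leRHS]mx_normrE; exact: (le_bigmax _ (fun ij => `|M ij.1 ij.2|) (i, j)). Qed.

Lemma mx_norm_entry (R : realDomainType) p q (M : 'M[R]_(p, q)) :
  M != 0 -> exists i j, `|M| = `|M i j|.
Proof.
move=> M0; have : mx_norm M != 0.
  by apply: contra M0 => /eqP /mx_norm_eq0 ->.
by move=> /mx_norm_neq0 [[i j] eqM]; exists i, j.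
Qed.

Section Bumps.
Variables (R : realType) (n : nat).
Implicit Types (x y v : 'cV[R]_n).

Definition sqnorm v := \sum_i v i ord0 ^+ 2.

Lemma sqnorm_ge0 v : 0 <= sqnorm v.
Proof. by apply: sumr_ge0 => i _; exact: sqr_ge0. Qed.

Lemma sqnorm_bounds v : `|v| ^+ 2 <= sqnorm v <= n%:R * `|v| ^+ 2.
Proof.
have entry_sqr i : v i ord0 ^+ 2 = `|v i ord0| ^+ 2 by rewrite real_normK ?num_real.
apply/andP; split.
  have [->|v0] := eqVneq v 0; first by rewrite normr0 expr0n sqnorm_ge0.
  have [i [j ->]] := mx_norm_entry v0; rewrite (ord1 j) -entry_sqr /sqnorm (bigD1 i) //=.
  by rewrite lerDl sumr_ge0 // => k _; exact: sqr_ge0.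
apply: (@le_trans _ _ (\sum_(i < n) `|v| ^+ 2)); last first.
  by rewrite sumr_const card_ord mulr_natl.
apply: ler_sum => i _.
by rewrite entry_sqr lerXn2r ?nnegrE // mx_entry_le_norm.
Qed.

Lemma netfun_sqnorm_sub y : netfun (fun x => sqnorm (y - x)).
Proof.
apply: netfun_sum => i; under eq_fun do rewrite !mxE expr2.
have ndiff := netfun_sub (netfun_const _ (y i ord0)) (netfun_coord _ i).
exact: netfun_mul.
Qed.

Definition bump (a H d : R) y x := a - H / d ^+ 2 * sqnorm (y - x).

Lemma netfun_bump a H d y : netfun (bump a H d y).
Proof. exact/netfun_sub/netfun_scale/netfun_sqnorm_sub/netfun_const. Qed.

Section BumpBounds.
Variables (a H d : R) (y : 'cV[R]_n).
Hypotheses (H0 : 0 <= H) (d0 : 0 < d).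

Let coef_ge0 : 0 <= H / d ^+ 2.
Proof. by rewrite divr_ge0 // sqr_ge0. Qed.

Lemma bump_le x : bump a H d y x <= a.
Proof. by rewrite /bump lerBlDr lerDl mulr_ge0 // sqnorm_ge0. Qed.

Lemma bump_le_far x : d <= `|y - x| -> bump a H d y x <= a - H.
Proof.
move=> far; rewrite /bump lerD2l lerN2.
apply: (@le_trans _ _ (H / d ^+ 2 * d ^+ 2)); first by rewrite divfK // sqrf_eq0 gt_eqF.
apply/(ler_wpM2l coef_ge0)/(le_trans _ (proj1 (andP (sqnorm_bounds _)))).
by rewrite lerXn2r ?nnegrE // ltW.
Qed.

Lemma bump_ge_near x c : 0 <= c -> `|y - x| <= c * d ->
  a - H * n%:R * c ^+ 2 <= bump a H d y x.
Proof.
move=> c0 near; rewrite /bump lerD2l lerN2.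
apply: le_trans (_ : H / d ^+ 2 * (n%:R * (c * d) ^+ 2) <= _).
  apply/(ler_wpM2l coef_ge0)/(le_trans (proj2 (andP (sqnorm_bounds _)))).
  by apply: ler_wpM2l => //; rewrite lerXn2r ?nnegrE // mulr_ge0 // ltW.
by rewrite [leLHS](_ : _ = H * n%:R * c ^+ 2) //; field; rewrite gt_eqF.
Qed.

Lemma bounded_on_bump (A : set 'cV[R]_n) r :
  (forall x, A x -> `|x| <= r) -> bounded_on A (bump a H d y).
Proof.
move=> Ar; exists (`|a| + H / d ^+ 2 * (n%:R * (`|y| + r) ^+ 2)) => x Ax.
apply: le_trans (ler_normB _ _) _; rewrite lerD2l normrM (ger0_norm coef_ge0).
rewrite (ger0_norm (sqnorm_ge0 _)); apply/(ler_wpM2l coef_ge0).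
apply: le_trans (proj2 (andP (sqnorm_bounds _))) _; apply: ler_wpM2l => //.
rewrite lerXn2r ?nnegrE // ?addr_ge0 //; first exact: le_trans (Ar x Ax).
by apply: le_trans (ler_normB _ _) _; rewrite lerD2l Ar.
Qed.

End BumpBounds.
End Bumps.

Lemma within_continuous_ball (R : realType) (T : pseudoMetricType R) (A : set T)
    (f : T -> R) y e :
  {within A, continuous f} -> A y -> 0 < e ->
  exists2 d, 0 < d & forall x, A x -> ball y d x -> `|f x - f y| < e.
Proof.
move=> fc Ay e0; have /cvgr_dist_lt/(_ e e0) fe := fc y.
have /nbhs_ballP[d d0 fd] : within A (nbhs y) (fun x => `|f y - f x| < e).
  by rewrite nbhs_subspace_in.
by exists d => // x Ax yx; rewrite distrC; exact: fd.
Qed.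

Section BumpMax.
Variables (R : realType) (n : nat) (K : set 'cV[R]_n) (f : 'cV[R]_n -> R).
Variables (B e c : R) (d : 'cV[R]_n -> R) (s : seq 'cV[R]_n).
Hypotheses (B0 : 0 <= B) (fB : forall x, K x -> `|f x| <= B) (d0 : forall y, 0 < d y).
Hypothesis fd : forall y, K y -> forall x, K x -> ball y (d y) x -> `|f x - f y| < e.
Hypotheses (c0 : 0 <= c) (c1 : c <= 1) (cB : 2 * B * n%:R * c ^+ 2 <= e).
Hypothesis sK : {subset s <= K}.
Hypothesis s_cover : forall x, K x -> exists2 z : 'cV[R]_n, z \in s & ball z (c * d z) x.

Let B2 : 0 <= 2 * B. Proof. by rewrite mulr_ge0. Qed.

Let e0 : 0 <= e. Proof. by apply: le_trans cB; rewrite !mulr_ge0 // sqr_ge0. Qed.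

Lemma bump_max_le x : K x ->
  \big[Num.max/- B]_(y <- s) bump (f y) (2 * B) (d y) y x <= f x + e.
Proof.
move=> Kx; have e_ge0 := e0; have /andP[fxl fxu] : - B <= f x <= B by rewrite -ler_norml fB.
rewrite big_seq; apply: bigmax_le => [|y ys]; first lra.
have Ky := set_mem (sK ys).
have /andP[fyl fyu] : - B <= f y <= B by rewrite -ler_norml fB.
have [far|near] := leP (d y) `|y - x|; first by have := bump_le_far (f y) B2 (d0 y) far; lra.
have := fd Ky Kx; rewrite -ball_normE /= => /(_ near); rewrite ltr_norml => /andP[fy _].
by have := bump_le (f y) (d y) y B2 x; lra.
Qed.

Lemma bump_max_ge x : K x ->
  f x - 2 * e <= \big[Num.max/- B]_(y <- s) bump (f y) (2 * B) (d y) y x.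
Proof.
move=> Kx; have [z zs zx] := s_cover Kx; apply: le_trans (le_bigmax_seq _ _ _ _ zs erefl).
move: zx; rewrite -ball_normE /= => zx.
have zx' : ball z (d z) x.
  rewrite -ball_normE /=; apply: lt_le_trans zx _.
  by apply: ler_piMl; [exact: ltW | exact: c1].
have := fd (set_mem (sK zs)) Kx zx'; rewrite ltr_norml => /andP[_ fz].
have : f z - e <= f z - 2 * B * n%:R * c ^+ 2 by rewrite lerD2l lerN2.
by have := bump_ge_near (f z) B2 (d0 z) c0 (ltW zx); lra.
Qed.

End BumpMax.

Lemma compact_ball_cover (R : realType) (V : normedModType R) (K : set V) (r : V -> R) :
  compact K -> (forall y, 0 < r y) ->
  exists2 s : seq V, {subset s <= K} & forall x, K x -> exists2 z, z \in s & ball z (r z) x.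
Proof.
rewrite compact_cover => cK r0.
have [|s sK Kcov] := cK _ K (fun y => ball y (r y)) (fun y _ => ball_open y (r y)).
  by move=> x Kx; exists x => //; exact: ballxx.
by exists s => [y /sK|x /Kcov[z zs zx]] //; exists z.
Qed.

Lemma exists_small_scale (R : realType) (a e : R) : 0 <= a -> 0 < e ->
  exists c, [/\ 0 < c, c <= 1 & a * c ^+ 2 <= e].
Proof.
move=> a0 e0; exists (Num.min 1 (e / (a + 1))).
have a1 : 0 < a + 1 by rewrite ltr_wpDl.
split; first by rewrite lt_min ltr01 divr_gt0.
  by rewrite ge_min lexx.
have [c1 ce] : Num.min 1 (e / (a + 1)) <= 1 /\ Num.min 1 (e / (a + 1)) <= e / (a + 1).
  by split; rewrite ge_min lexx ?orbT.
set c := Num.min _ _ in c1 ce *; have c0 : 0 <= c by rewrite le_min ler01 divr_ge0 ?ltW.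
by rewrite ler_pdivlMr // in ce; rewrite expr2; nra.
Qed.

Lemma continuous_approximable (R : realType) n (K : set 'cV[R]_n) (f : 'cV[R]_n -> R) :
  compact K -> {within K, continuous f} -> approximable K f.
Proof.
move=> cK fc eps eps0.
have [e e0 ->] : exists2 e, 0 < e & eps = 3 * e by exists (eps / 3); [lra | field].
have [B B0 fB] : exists2 B, 0 < B & forall x, K x -> `|f x| <= B.
  have [B B0 fB] := ex_strict_bound_gt0 (compact_bounded (continuous_compact fc cK)).
  by exists B => // x Kx; apply/ltW/fB; exists x.
have [r _ Kr] := ex_strict_bound_gt0 (compact_bounded cK).
have /choice[d dP] : forall y, exists d : R,
    0 < d /\ (K y -> forall x, K x -> ball y d x -> `|f x - f y| < e).
  move=> y; have [Ky|nKy] := pselect (K y); last by exists 1.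
  by have [d d0 fd] := within_continuous_ball fc Ky e0; exists d.
have d0 y : 0 < d y by case: (dP y).
have fd y : K y -> forall x, K x -> ball y (d y) x -> `|f x - f y| < e by case: (dP y).
have [c [c0 c1 cB]] := @exists_small_scale _ (2 * B * n%:R) e
  (mulr_ge0 (mulr_ge0 (ler0n _ 2) (ltW B0)) (ler0n _ n)) e0.
have [s sK s_cover] := compact_ball_cover (r := fun y => c * d y) cK (fun y => mulr_gt0 c0 (d0 y)).
have Bb y : bounded_on K (bump (f y) (2 * B) (d y) y).
  by apply: bounded_on_bump => [|x Kx]; [rewrite mulr_ge0 // ltW | exact/ltW/Kr].
have Ab y : approximable K (bump (f y) (2 * B) (d y) y) by exact/approximable_netfun/netfun_bump.
have [F nF eF] := approximable_bigmax s (- B) Bb Ab e0; exists F => // x Kx.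
have := bump_max_le (ltW B0) fB d0 fd (ltW c0) cB sK Kx.
have := bump_max_ge (ltW B0) d0 fd (ltW c0) c1 cB sK s_cover Kx.
by have := eF x Kx; rewrite !ler_norml => /andP[? ?] ? ?; apply/andP; split; lra.
Qed.

Section Activation.
Variable R : realType.

Lemma square_sm_activation : sm_activation (@square R).
Proof.
have sqE : @square R = (@GRing.exp R)^~ 2 by [].
split.
- by move=> [a [b affine]]; move: (affine 0) (affine 1) (affine (-1)); rewrite /square; lra.
- by move=> x; rewrite sqE; exact: exprn_derivable.
- exists 2 => x y; rewrite sqE !exp_derive1 /= !expr1 -scalerBr normrZ ger0_norm //.
Qed.

Lemma icnn_eval_coord0 m (u : 'cV[R]_m.+1) :
  icnn_eval (icnn_single false (delta_mx ord0 ord0) 0) u = u ord0 ord0.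
Proof. by rewrite /icnn_eval /opt_relu addr0 -rowE mxE. Qed.

End Activation.

Theorem mainTheorem7 (R : realType) (n m : nat) (hn : (0 < n)%N) (hm : (0 < m)%N)
  (K : set 'cV[R]_n) (f : 'cV[R]_n -> R) (eps : R) :
  compact K -> {within K, continuous f} -> 0 < eps ->
  exists (g1 : icnn R m) (sigma : R -> R) (g2 : ffn R m n),
    [/\ icnn_nonneg g1, sm_activation sigma &
        (ereal_sup [set (`| icnn_eval g1 (ffn_eval sigma g2 x) - f x |)%:E | x in K]
           < eps%:E)%E ].
Proof.
move=> cK fc eps0; case: m hm => // m _.
have [F nF fF] := continuous_approximable cK fc (divr_gt0 eps0 (ltr0Sn _ 1)).
have [N eN] := realizable_comp (realizable_affine (const_mx 1 : 'M[R]_(m.+1, 1)) 0) nF.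
exists (icnn_single false (delta_mx ord0 ord0) 0), (@square R), N.
split => //; first exact: square_sm_activation.
apply: (@le_lt_trans _ _ (eps / 2)%:E); last by rewrite lte_fin; lra.
apply: ge_ereal_sup => _ [x Kx <-]; rewrite lee_fin icnn_eval_coord0 eN.
by rewrite addr0 !mxE big_ord1 !mxE mul1r; exact: fF.
Qed.
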